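(* Let $X$ be a topological space in which every open set is a union of countably many clopen sets. The following are equivalent: (1) $X$ has the bounded-ideal convergence property; (2) for each family $\{f_d\}_{d\in\mathbb{N}\times\mathbb{N}}$ of Borel real-valued functions on $X$ which $\mathcal{I}_b$-converges to $0$, there is $A\in\mathcal{I}_b^*$ such that $\{f_d\}_{d\in A}$ converges pointwise to $0$; (3) for each family $\{f_d\}_{d\in\mathbb{N}\times\mathbb{N}}$ of Borel real-valued functions on $X$ which $\mathcal{I}_b$-converges to a Borel function $f$, there is $A\in\mathcal{I}_b^*$ such that $\{f_d\}_{d\in A}$ converges pointwise to $f$; (4) for each family $\{f_d\}_{d\in\mathbb{N}\times\mathbb{N}}$ of Borel real-valued functions on $X$ which $\mathcal{I}_b$-converges to a function $f:X\to\mathbb{R}$, there is $A\in\mathcal{I}_b^*$ such that $\{f_d\}_{d\in A}$ converges pointwise to $f$.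
   Context: For $h\in\mathbb{N}^{\mathbb{N}}$ let $A_h=\{(n,m)\in\mathbb{N}\times\mathbb{N}:m\le h(n)\}$. The bounded-ideal is $\mathcal{I}_b=\{B\subseteq\mathbb{N}\times\mathbb{N}:\exists h\in\mathbb{N}^{\mathbb{N}},\ B\subseteq A_h\}$ and $\mathcal{I}_b^*=\{(\mathbb{N}\times\mathbb{N})\setminus B:B\in\mathcal{I}_b\}$. A family $\{f_d\}_{d\in\mathbb{N}\times\mathbb{N}}$ of real functions on $X$ $\mathcal{I}_b$-converges to $f$ if for each $x\in X$ and $\epsilon>0$, $\{d:|f_d(x)-f(x)|<\epsilon\}\in\mathcal{I}_b^*$. For infinite $A$, $\{f_d\}_{d\in A}$ converges pointwise to $f$ if for each $x$ and $\epsilon>0$ only finitely many $d\in A$ have $|f_d(x)-f(x)|\ge\epsilon$. $X$ has the bounded-ideal convergence property if for each family $\{f_d\}_{d\in\mathbb{N}\times\mathbb{N}}$ of continuous real-valued functions on $X$ which $\mathcal{I}_b$-converges to $0$ there is $A\in\mathcal{I}_b^*$ with $\{f_d\}_{d\in A}$ converging pointwise to $0$. *)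

From Stdlib Require Import Reals List.
Open Scope R_scope.

Record Topology (X : Type) : Type := {
  is_open : (X -> Prop) -> Prop;
  open_full : is_open (fun _ => True);
  open_inter : forall U V, is_open U -> is_open V -> is_open (fun x => U x /\ V x);
  open_union : forall (I : Type) (F : I -> X -> Prop),
      (forall i, is_open (F i)) -> is_open (fun x => exists i, F i x)
}.
Arguments is_open {X} _ _.

Definition clopen {X : Type} (T : Topology X) (U : X -> Prop) : Prop :=
  is_open T U /\ is_open T (fun x => ~ U x).

Definition open_countable_union_clopen {X : Type} (T : Topology X) : Prop :=
  forall U, is_open T U ->
    exists C : nat -> X -> Prop,
      (forall n, clopen T (C n)) /\ (forall x, U x <-> exists n, C n x).

Definition R_open (V : R -> Prop) : Prop :=
  forall y, V y -> exists eps, 0 < eps /\ forall z, Rabs (z - y) < eps -> V z.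

Definition continuous_fun {X : Type} (T : Topology X) (f : X -> R) : Prop :=
  forall V, R_open V -> is_open T (fun x => V (f x)).

Definition sigma_algebra {X : Type} (S : (X -> Prop) -> Prop) : Prop :=
  S (fun _ => True) /\
  (forall A, S A -> S (fun x => ~ A x)) /\
  (forall F : nat -> X -> Prop, (forall n, S (F n)) -> S (fun x => exists n, F n x)).

Definition borel_set {X : Type} (T : Topology X) (B : X -> Prop) : Prop :=
  forall S : (X -> Prop) -> Prop, sigma_algebra S ->
    (forall U, is_open T U -> S U) -> S B.

Definition borel_fun {X : Type} (T : Topology X) (f : X -> R) : Prop :=
  forall V, R_open V -> borel_set T (fun x => V (f x)).

Definition A_h (h : nat -> nat) (d : nat * nat) : Prop := (snd d <= h (fst d))%nat.

Definition in_Ib (B : nat * nat -> Prop) : Prop :=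
  exists h : nat -> nat, forall d, B d -> A_h h d.

Definition in_Ib_star (A : nat * nat -> Prop) : Prop :=
  exists B, in_Ib B /\ forall d, A d <-> ~ B d.

Definition Ib_converges {X : Type} (fam : nat * nat -> X -> R) (f : X -> R) : Prop :=
  forall x eps, 0 < eps -> in_Ib_star (fun d => Rabs (fam d x - f x) < eps).

Definition finite_set {T : Type} (P : T -> Prop) : Prop :=
  exists l : list T, forall t, P t -> In t l.

Definition pointwise_converges_on {X : Type} (A : nat * nat -> Prop)
    (fam : nat * nat -> X -> R) (f : X -> R) : Prop :=
  forall x eps, 0 < eps ->
    finite_set (fun d => A d /\ Rabs (fam d x - f x) >= eps).

Definition bounded_ideal_convergence_property {X : Type} (T : Topology X) : Prop :=
  forall fam : nat * nat -> X -> R,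
    (forall d, continuous_fun T (fam d)) ->
    Ib_converges fam (fun _ => 0) ->
    exists A, in_Ib_star A /\ pointwise_converges_on A fam (fun _ => 0).

(* The main implication is (1) => (4).  Applied to indicators of clopen sets, (1) yields a
   selection principle: if clopen sets E_d are such that every point lies in an I_b-small
   set of them, then a single h works for all points, each point lying in only finitely many
   E_d off A_h.  Since open sets are countable unions of clopen sets, this principle lets one
   enlarge closed sets F_p to clopen sets D_p which, at every point, differ from F_p for only
   finitely many p.  Hence complements of F_sigma sets are F_sigma, every Borel set is both
   F_sigma and G_delta, and the principle extends from clopen to Borel families.  For a Borel
   family f_d it is applied, at each precision 1/(k+1), to the sets where f_d is far from a
   later term of its row; these sets do not involve f, which is why f need not be Borel.  The
   resulting h_k are combined along the diagonal. *)

From Stdlib Require Import Reals ZArith List Lia Lra Psatz Classical FunctionalExtensionality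
  PropExtensionality IndefiniteDescription ClassicalEpsilon Cantor.
Open Scope R_scope.

Lemma set_ext {X : Type} (A B : X -> Prop) : (forall x, A x <-> B x) -> A = B.
Proof.
  intro H; apply functional_extensionality; intro x; apply propositional_extensionality; auto.
Qed.

Lemma finite_set_mono {T : Type} (P Q : T -> Prop) :
  (forall t, P t -> Q t) -> finite_set Q -> finite_set P.
Proof. intros HPQ [l Hl]; exists l; auto. Qed.

Lemma finite_set_or {T : Type} (P Q : T -> Prop) :
  finite_set P -> finite_set Q -> finite_set (fun t => P t \/ Q t).
Proof. intros [l Hl] [l' Hl']; exists (l ++ l'); intros t [H|H]; apply in_or_app; auto. Qed.

Lemma finite_set_lt (N : nat) : finite_set (fun n => (n < N)%nat).
Proof. exists (seq 0 N); intros n Hn; apply in_seq; lia. Qed.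

Lemma finite_set_nat_bound (P : nat -> Prop) :
  finite_set P -> exists N, forall n, P n -> (n < N)%nat.
Proof.
  intros [l Hl].
  enough (Hb : exists N, forall n, In n l -> (n < N)%nat) by
    (destruct Hb as [N HN]; exists N; auto).
  clear Hl; induction l as [|a l [N HN]]; [exists 0%nat; intros n []|].
  exists (S (Nat.max a N)); intros n [<-|Hn]; [lia|specialize (HN n Hn); lia].
Qed.

Lemma finite_set_preimage {A B : Type} (f : A -> B) (g : B -> A) (P : B -> Prop) :
  (forall a, g (f a) = a) -> finite_set P -> finite_set (fun a => P (f a)).
Proof.
  intros Hgf [l Hl]; exists (map g l); intros a Ha.
  rewrite <- (Hgf a); apply in_map, Hl, Ha.
Qed.

Lemma finite_set_fst {B : Type} (P : nat * B -> Prop) :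
  finite_set P -> finite_set (fun n => exists b, P (n, b)).
Proof.
  intros [l Hl]; exists (map fst l); intros n [b Hb].
  change n with (fst (n, b)); apply in_map, Hl, Hb.
Qed.

Lemma finite_set_rows (g : nat -> nat) (P : nat -> Prop) :
  finite_set P -> finite_set (fun d : nat * nat => P (fst d) /\ (snd d <= g (fst d))%nat).
Proof.
  intros [l Hl]; exists (flat_map (fun n => map (pair n) (seq 0 (S (g n)))) l).
  intros [n m] [Hn Hm]; cbn [fst snd] in *.
  apply in_flat_map; exists n; split; [apply Hl, Hn|].
  apply in_map, in_seq; lia.
Qed.

Lemma in_Ib_star_compl (A : nat * nat -> Prop) : in_Ib_star A -> in_Ib (fun d => ~ A d).
Proof.
  intros [B [[h Hh] HAB]]; exists h; intros d Hd.
  apply Hh, NNPP; intro nB; apply Hd, HAB, nB.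
Qed.

Lemma in_Ib_star_of_compl (A : nat * nat -> Prop) : in_Ib (fun d => ~ A d) -> in_Ib_star A.
Proof.
  intro H; exists (fun d => ~ A d); split; [exact H|].
  intro d; split; [tauto|apply NNPP].
Qed.

Lemma in_Ib_star_not_A_h (h : nat -> nat) : in_Ib_star (fun d => ~ A_h h d).
Proof. apply in_Ib_star_of_compl; exists h; intros d; apply NNPP. Qed.

Lemma diagonal_dominating (hk : nat -> nat -> nat) :
  exists h : nat -> nat, forall k n, (k <= n)%nat -> (hk k n <= h n)%nat.
Proof.
  destruct (functional_choice (fun n b => forall k, (k <= n)%nat -> (hk k n <= b)%nat)) as [h Hh];
    [|exists h; intros k n; apply Hh].
  intro n.
  enough (Hb : forall N, exists b, forall k, (k <= N)%nat -> (hk k n <= b)%nat) by apply Hb.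
  induction N as [|N [b Hb]]; [exists (hk 0%nat n); intros k Hk; replace k with 0%nat by lia; lia|].
  exists (Nat.max b (hk (S N) n)); intros k Hk.
  destruct (Nat.eq_dec k (S N)) as [->|Hne]; [lia|specialize (Hb k ltac:(lia)); lia].
Qed.

Lemma Ib_converges_row_tail {X : Type} (fam : nat * nat -> X -> R) (f : X -> R) x e :
  Ib_converges fam f -> 0 < e ->
  exists h0 : nat -> nat, forall n m, (h0 n < m)%nat -> Rabs (fam (n, m) x - f x) < e.
Proof.
  intros Hconv He; destruct (in_Ib_star_compl _ (Hconv x e He)) as [h0 Hh0].
  exists h0; intros n m Hm; apply NNPP; intro Hn.
  specialize (Hh0 (n, m) Hn); unfold A_h in Hh0; simpl in Hh0; lia.
Qed.

Definition Ib_selective {X : Type} (Phi : (X -> Prop) -> Prop) : Prop :=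
  forall E : nat * nat -> X -> Prop, (forall d, Phi (E d)) ->
    (forall x, in_Ib (fun d => E d x)) ->
    exists h : nat -> nat, forall x, finite_set (fun d => ~ A_h h d /\ E d x).

Definition first_hit {X : Type} (D : nat * nat -> X -> Prop) (d : nat * nat) (x : X) : Prop :=
  D d x /\ forall j, (j < snd d)%nat -> ~ D (fst d, j) x.

Lemma first_hit_exists {X : Type} (D : nat * nat -> X -> Prop) n j x :
  D (n, j) x -> exists m, first_hit D (n, m) x.
Proof.
  revert j; induction j as [j IH] using (well_founded_induction Wf_nat.lt_wf); intro Dj.
  destruct (classic (exists i, (i < j)%nat /\ D (n, i) x)) as [[i [Hij Di]]|Hnone].
  - exact (IH i Hij Di).
  - exists j; split; [exact Dj|]; intros i Hij Di; apply Hnone; eauto.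
Qed.

Lemma first_hit_le {X : Type} (D : nat * nat -> X -> Prop) n m j x :
  first_hit D (n, m) x -> D (n, j) x -> (m <= j)%nat.
Proof. intros [_ Hfirst] Dj; apply Nat.nlt_ge; intro Hjm; exact (Hfirst j Hjm Dj). Qed.

Lemma first_hit_in_Ib {X : Type} (D : nat * nat -> X -> Prop) x :
  in_Ib (fun d => first_hit D d x).
Proof.
  destruct (functional_choice (fun n b => forall m, first_hit D (n, m) x -> (m <= b)%nat)) as [h Hh].
  - intro n; destruct (classic (exists j, D (n, j) x)) as [[j Dj]|Hnone].
    + exists j; intros m Hm; exact (first_hit_le D n m j x Hm Dj).
    + exists 0%nat; intros m [Dm _]; exfalso; eauto.
  - exists h; intros [n m] Hm; exact (Hh n m Hm).
Qed.

Section Topology_facts.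

Context {X : Type} (T : Topology X).

Lemma open_ext (A B : X -> Prop) : (forall x, A x <-> B x) -> is_open T A -> is_open T B.
Proof. intros H HA; rewrite <- (set_ext A B H); exact HA. Qed.

Lemma open_empty : is_open T (fun _ => False).
Proof.
  apply (open_ext (fun x => exists i : False, True)); [intro x; split; [intros [[] _]|intros []]|].
  apply (open_union X T False (fun _ _ => True)); intros [].
Qed.

Lemma open_or (A B : X -> Prop) :
  is_open T A -> is_open T B -> is_open T (fun x => A x \/ B x).
Proof.
  intros HA HB.
  apply (open_ext (fun x => exists b : bool, (if b then A else B) x)).
  - intro x; split; [intros [[|] H]; auto|intros [H|H]; [exists true|exists false]; auto].
  - apply open_union; intros [|]; assumption.
Qed.

Definition closed (F : X -> Prop) : Prop := is_open T (fun x => ~ F x).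

Lemma closed_of_clopen (A : X -> Prop) : clopen T A -> closed A.
Proof. intros [_ H]; exact H. Qed.

Lemma closed_full : closed (fun _ => True).
Proof. apply (open_ext (fun _ => False)); [intro; tauto|exact open_empty]. Qed.

Lemma closed_empty : closed (fun _ => False).
Proof. apply (open_ext (fun _ => True)); [intro; tauto|exact (open_full X T)]. Qed.

Lemma closed_forall (P : nat -> X -> Prop) :
  (forall n, closed (P n)) -> closed (fun x => forall n, P n x).
Proof.
  intro HP; apply (open_ext (fun x => exists n, ~ P n x)); [|exact (open_union X T nat _ HP)].
  intro x; split; [intros [n Hn] Hall; auto|apply not_all_ex_not].
Qed.

Lemma closed_exists_le (P : nat -> X -> Prop) :
  (forall n, closed (P n)) -> forall j, closed (fun x => exists a, (a <= j)%nat /\ P a x).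
Proof.
  intros HP j; induction j as [|j IH].
  - apply (open_ext (fun x => ~ P 0%nat x)); [|apply HP].
    intro x; split; [intros H [a [Ha Pa]]; replace a with 0%nat in Pa by lia; auto|].
    intros H P0; apply H; exists 0%nat; auto.
  - apply (open_ext (fun x => ~ (exists a, (a <= j)%nat /\ P a x) /\ ~ P (S j) x));
      [|exact (open_inter X T _ _ IH (HP (S j)))].
    intro x; split.
    + intros [H1 H2] [a [Ha Pa]].
      destruct (Nat.eq_dec a (S j)) as [->|Hne]; [auto|apply H1; exists a; split; [lia|auto]].
    + intro H; split; [intros [a [Ha Pa]]|intro PS]; apply H; [exists a|exists (S j)]; split; auto.
Qed.

Lemma clopen_compl (A : X -> Prop) : clopen T A -> clopen T (fun x => ~ A x).
Proof.
  intros [H1 H2]; split; [exact H2|].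
  apply (open_ext A); [intro x; split; [tauto|apply NNPP]|exact H1].
Qed.

Lemma clopen_and (A B : X -> Prop) :
  clopen T A -> clopen T B -> clopen T (fun x => A x /\ B x).
Proof.
  intros [H1 H2] [H3 H4]; split; [exact (open_inter X T _ _ H1 H3)|].
  apply (open_ext (fun x => ~ A x \/ ~ B x)); [intro x; tauto|exact (open_or _ _ H2 H4)].
Qed.

Lemma clopen_forall_lt (P : nat -> X -> Prop) :
  (forall k, clopen T (P k)) -> forall m, clopen T (fun x => forall k, (k < m)%nat -> P k x).
Proof.
  intros HP m; induction m as [|m IH].
  - split.
    + apply (open_ext (fun _ => True)); [intro x; split; intros; [lia|auto]|exact (open_full X T)].
    + apply (open_ext (fun _ => False)); [intro x; split; [tauto|intros H; apply H; intros; lia]|].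
      exact open_empty.
  - destruct (clopen_and _ _ IH (HP m)) as [H1 H2]; split.
    + refine (open_ext _ _ _ H1).
      intro x; split; [intros [Hlt Pm] k Hk|intro H; split; auto].
      destruct (Nat.eq_dec k m) as [->|Hne]; [exact Pm|apply Hlt; lia].
    + refine (open_ext _ _ _ H2).
      intro x; split; intros Hn H; apply Hn; [split; auto|intros k Hk].
      destruct H as [Hlt Pm]; destruct (Nat.eq_dec k m) as [->|Hne]; [exact Pm|apply Hlt; lia].
Qed.

Lemma clopen_first_hit (D : nat * nat -> X -> Prop) :
  (forall d, clopen T (D d)) -> forall d, clopen T (first_hit D d).
Proof.
  intros HD d; apply clopen_and; [apply HD|].
  apply clopen_forall_lt; intro j; apply clopen_compl, HD.
Qed.

Lemma borel_ext (A B : X -> Prop) : (forall x, A x <-> B x) -> borel_set T A -> borel_set T B.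
Proof. intros H HA; rewrite <- (set_ext A B H); exact HA. Qed.

Lemma borel_union (B : nat -> X -> Prop) :
  (forall n, borel_set T (B n)) -> borel_set T (fun x => exists n, B n x).
Proof. intros H S HS HO; apply (proj2 (proj2 HS)); intro n; apply H; auto. Qed.

Lemma borel_compl (A : X -> Prop) : borel_set T A -> borel_set T (fun x => ~ A x).
Proof. intros H S HS HO; apply (proj1 (proj2 HS)), H; auto. Qed.

Lemma borel_or (A B : X -> Prop) :
  borel_set T A -> borel_set T B -> borel_set T (fun x => A x \/ B x).
Proof.
  intros HA HB; apply (borel_ext (fun x => exists n : nat, (if Nat.eqb n 0 then A else B) x)).
  - intro x; split; [intros [[|n] H]; auto|intros [H|H]; [exists 0%nat|exists 1%nat]; auto].
  - apply borel_union; intros [|n]; assumption.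
Qed.

Lemma borel_and (A B : X -> Prop) :
  borel_set T A -> borel_set T B -> borel_set T (fun x => A x /\ B x).
Proof.
  intros HA HB; apply (borel_ext (fun x => ~ (~ A x \/ ~ B x))); [intro x; tauto|].
  apply borel_compl, borel_or; apply borel_compl; assumption.
Qed.

Lemma borel_fun_lt (g : X -> R) (c : R) : borel_fun T g -> borel_set T (fun x => g x < c).
Proof.
  intro Hg; apply (Hg (fun y => y < c)); intros y Hy; exists (c - y); split; [lra|].
  intros z Hz; apply Rabs_def2 in Hz; lra.
Qed.

Lemma borel_fun_gt (g : X -> R) (c : R) : borel_fun T g -> borel_set T (fun x => c < g x).
Proof.
  intro Hg; apply (Hg (fun y => c < y)); intros y Hy; exists (y - c); split; [lra|].
  intros z Hz; apply Rabs_def2 in Hz; lra.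
Qed.

Lemma borel_fun_of_continuous (g : X -> R) : continuous_fun T g -> borel_fun T g.
Proof. intros Hg V HV S HS HO; apply HO, Hg, HV. Qed.

Lemma borel_fun_const (c : R) : borel_fun T (fun _ => c).
Proof.
  intros V HV S HS HO; apply HO; destruct (classic (V c)) as [Vc|Vc].
  - apply (open_ext (fun _ => True)); [intro; tauto|exact (open_full X T)].
  - apply (open_ext (fun _ => False)); [intro; tauto|exact open_empty].
Qed.

Definition Fsigma (B : X -> Prop) : Prop :=
  exists F : nat -> X -> Prop, (forall n, closed (F n)) /\ forall x, B x <-> exists n, F n x.

Lemma Fsigma_ext (A B : X -> Prop) : (forall x, A x <-> B x) -> Fsigma A -> Fsigma B.
Proof. intros H [F [HF HA]]; exists F; split; [exact HF|]; intro x; rewrite <- H; apply HA. Qed.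

Lemma Fsigma_of_closed (A : X -> Prop) : closed A -> Fsigma A.
Proof.
  intro H; exists (fun _ => A); split; [intros _; exact H|].
  intro x; split; [exists 0%nat; auto|intros [_ Ax]; exact Ax].
Qed.

Lemma Fsigma_union (B : nat -> X -> Prop) :
  (forall n, Fsigma (B n)) -> Fsigma (fun x => exists n, B n x).
Proof.
  intro H; destruct (functional_choice _ H) as [F HF].
  exists (fun k => F (fst (of_nat k)) (snd (of_nat k))); split; [intro k; apply HF|].
  intro x; split.
  - intros [n Bn]; apply (proj2 (HF n)) in Bn as [j Fj].
    exists (to_nat (n, j)); rewrite cancel_of_to; exact Fj.
  - intros [k Fk]; exists (fst (of_nat k)); apply (proj2 (HF _)); eauto.
Qed.

Definition indicator (E : X -> Prop) (x : X) : R :=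
  if excluded_middle_informative (E x) then 1 else 0.

Lemma indicator_continuous (E : X -> Prop) : clopen T E -> continuous_fun T (indicator E).
Proof.
  intros [HE HnE] V _; unfold indicator.
  destruct (classic (V 1)), (classic (V 0));
    [apply (open_ext (fun _ => True)); [|exact (open_full X T)]
    |apply (open_ext E); [|exact HE]
    |apply (open_ext (fun x => ~ E x)); [|exact HnE]
    |apply (open_ext (fun _ => False)); [|exact open_empty]];
    intro x; destruct excluded_middle_informative; tauto.
Qed.

End Topology_facts.

Lemma clopen_selective_of_convergence_property {X : Type} (T : Topology X) :
  bounded_ideal_convergence_property T -> Ib_selective (clopen T).
Proof.
  intros HP E HE HEx.
  destruct (HP (fun d => indicator (E d))) as [A [HA Hpw]].
  - intro d; apply indicator_continuous, HE.
  - intros x eps Heps; apply in_Ib_star_of_compl.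
    destruct (HEx x) as [h Hh]; exists h; intros d Hd; apply Hh.
    unfold indicator in Hd; destruct excluded_middle_informative as [Ed|_]; [exact Ed|].
    exfalso; apply Hd; rewrite Rminus_0_r, Rabs_R0; exact Heps.
  - destruct (in_Ib_star_compl A HA) as [h Hh]; exists h; intro x.
    refine (finite_set_mono _ _ _ (Hpw x 1 Rlt_0_1)); intros d [Hd Ed]; split.
    + apply NNPP; intro nA; exact (Hd (Hh d nA)).
    + unfold indicator; destruct excluded_middle_informative; [|contradiction].
      rewrite Rminus_0_r, Rabs_R1; lra.
Qed.

Section Borel_selection.

Context {X : Type} (T : Topology X).
Hypothesis hX : open_countable_union_clopen T.
Hypothesis Hsel : Ib_selective (clopen T).

Lemma clopen_envelope (F : nat -> X -> Prop) :
  (forall p, closed T (F p)) ->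
  exists D : nat -> X -> Prop, (forall p, clopen T (D p)) /\ (forall p x, F p x -> D p x) /\
    forall x, finite_set (fun p => D p x /\ ~ F p x).
Proof.
  intro HF.
  destruct (functional_choice (fun p (C : nat -> X -> Prop) =>
      (forall k, clopen T (C k)) /\ forall x, ~ F p x <-> exists k, C k x)) as [C HC].
  { intro p; apply hX, HF. }
  set (C2 := fun d : nat * nat => C (fst d) (snd d)).
  destruct (Hsel (first_hit C2)) as [h Hh].
  { apply clopen_first_hit; intros [p k]; apply HC. }
  { apply first_hit_in_Ib. }
  exists (fun p x => forall k, (k < S (h p))%nat -> ~ C p k x); split; [|split].
  - intro p; apply clopen_forall_lt; intro k; apply clopen_compl, HC.
  - intros p x Fx k _ Ck; apply (proj2 (HC p) x); eauto.
  - intro x; refine (finite_set_mono _ _ _ (finite_set_fst _ (Hh x))).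
    intros p [Dp nFp]; apply (proj2 (HC p) x) in nFp as [k Ck].
    destruct (first_hit_exists C2 p k x Ck) as [m Hm]; exists m; split; [|exact Hm].
    unfold A_h; simpl; intro Hmh; exact (Dp m ltac:(lia) (proj1 Hm)).
Qed.

Lemma clopen_envelope_pairs (F : nat * nat -> X -> Prop) :
  (forall d, closed T (F d)) ->
  exists D : nat * nat -> X -> Prop, (forall d, clopen T (D d)) /\
    (forall d x, F d x -> D d x) /\ forall x, finite_set (fun d => D d x /\ ~ F d x).
Proof.
  intro HF.
  destruct (clopen_envelope (fun p => F (of_nat p))) as [D [HD [HFD HDF]]]; [intro; apply HF|].
  exists (fun d => D (to_nat d)); split; [|split].
  - intro d; apply HD.
  - intros d x Fd; apply HFD; rewrite cancel_of_to; exact Fd.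
  - intro x; refine (finite_set_mono _ _ _ (finite_set_preimage to_nat of_nat _ cancel_of_to (HDF x))).
    intros d [Dd nFd]; rewrite cancel_of_to; split; assumption.
Qed.

Lemma Fsigma_compl (A : X -> Prop) : Fsigma T A -> Fsigma T (fun x => ~ A x).
Proof.
  intros [F [HF HA]].
  destruct (clopen_envelope (fun p x => exists q, (q <= p)%nat /\ F q x)) as [D [HD [HFD HDF]]].
  { intro p; apply closed_exists_le, HF. }
  exists (fun N x => forall p, ~ D (N + p)%nat x); split.
  - intro N; apply closed_forall; intro p; apply closed_of_clopen, clopen_compl, HD.
  - intro x; split.
    + intro nA; destruct (finite_set_nat_bound _ (HDF x)) as [N HN]; exists N; intros p Dp.
      enough (N + p < N)%nat by lia.
      apply HN; split; [exact Dp|]; intros [q [_ Fq]]; apply nA, HA; eauto.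
    + intros [N HN] Ax; apply HA in Ax as [q Fq].
      apply (HN q), HFD; exists q; split; [lia|exact Fq].
Qed.

Definition ambiguous (B : X -> Prop) : Prop := Fsigma T B /\ Fsigma T (fun x => ~ B x).

Lemma borel_ambiguous (B : X -> Prop) : borel_set T B -> ambiguous B.
Proof.
  intro HB; apply (HB ambiguous).
  - split; [|split].
    + split; [apply Fsigma_of_closed, closed_full|].
      apply (Fsigma_ext _ (fun _ => False)); [intro; tauto|apply Fsigma_of_closed, closed_empty].
    + intros A [HA HnA]; split; [exact HnA|].
      apply (Fsigma_ext _ A); [intro x; split; [tauto|apply NNPP]|exact HA].
    + intros F HF.
      assert (HU : Fsigma T (fun x => exists n, F n x)) by (apply Fsigma_union; intro; apply HF).
      split; [exact HU|apply Fsigma_compl, HU].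
  - intros U HU; split.
    + destruct (hX U HU) as [C [HC HCU]]; exists C; split; [|exact HCU].
      intro n; apply closed_of_clopen, HC.
    + apply Fsigma_of_closed; apply (open_ext T U); [intro x; split; [tauto|apply NNPP]|exact HU].
Qed.

Lemma closed_row_tails (L : nat * nat -> X -> Prop) :
  (forall d, borel_set T (L d)) -> (forall x, in_Ib (fun d => L d x)) ->
  exists G : nat * nat -> X -> Prop, (forall d, closed T (G d)) /\
    (forall n j m x, G (n, j) x -> (j <= m)%nat -> ~ L (n, m) x) /\
    (forall x n, exists j, G (n, j) x).
Proof.
  intros HL HLx.
  set (tail := fun (d : nat * nat) x => exists i, L (fst d, snd d + i)%nat x).
  destruct (functional_choice (fun d (F : nat -> X -> Prop) =>
      (forall k, closed T (F k)) /\ forall x, ~ tail d x <-> exists k, F k x)) as [F HF].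
  { intro d; apply (borel_ambiguous (tail d)), borel_union; intro i; apply HL. }
  (* [tail d] is Borel, hence G_delta: its complement is the union of the closed [F d k]. *)
  exists (fun d x => exists a, (a <= snd d)%nat /\ exists k, (k <= snd d)%nat /\ F (fst d, a) k x).
  split; [|split].
  - intro d; apply closed_exists_le; intro a; apply closed_exists_le; intro k; apply HF.
  - intros n j m x [a [Ha [k [_ Fk]]]] Hjm Lm; cbn [fst snd] in *.
    assert (Htail : ~ tail (n, a) x) by (apply (proj2 (HF (n, a)) x); eauto).
    apply Htail; exists (m - a)%nat; cbn [fst snd].
    replace (a + (m - a))%nat with m by lia; exact Lm.
  - intros x n; destruct (HLx x) as [g Hg].
    assert (Htail : ~ tail (n, S (g n)) x).
    { intros [i Li]; specialize (Hg _ Li); unfold A_h in Hg; cbn [fst snd] in Hg; lia. }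
    apply (proj2 (HF _)) in Htail as [k Fk].
    exists (Nat.max (S (g n)) k); cbn [fst snd].
    exists (S (g n)); split; [lia|]; exists k; split; [lia|exact Fk].
Qed.

Theorem borel_selective : Ib_selective (borel_set T).
Proof.
  intros L HL HLx.
  destruct (closed_row_tails L HL HLx) as [G [HG [HGL HGx]]].
  destruct (clopen_envelope_pairs G HG) as [D [HD [HGD HDG]]].
  destruct (Hsel (first_hit D)) as [h Hh]; [apply clopen_first_hit, HD|apply first_hit_in_Ib|].
  exists h; intro x; destruct (HLx x) as [g Hg].
  refine (finite_set_mono _ _ _
    (finite_set_rows g _ (finite_set_fst _ (finite_set_or _ _ (Hh x) (HDG x))))).
  intros [n m] [Hm Lm]; cbn [fst snd]; split; [|exact (Hg _ Lm)].
  destruct (HGx x n) as [j0 Gj0].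
  destruct (first_hit_exists D n j0 x (HGD _ _ Gj0)) as [j Hj]; exists j.
  destruct (le_lt_dec j (h n)) as [Hjh|Hjh].
  - right; split; [exact (proj1 Hj)|]; intro Gj.
    apply (HGL n j m x Gj); [unfold A_h in Hm; cbn [fst snd] in Hm; lia|exact Lm].
  - left; split; [unfold A_h; cbn [fst snd]; lia|exact Hj].
Qed.

End Borel_selection.

(* A whole cell of the grid [s Z] lies strictly between [a] and [b].  Unlike [s < |a - b|],
   this is visibly Borel in [x] when [a] and [b] are Borel functions of [x]. *)
Definition apart (s a b : R) : Prop :=
  exists z : Z, (a < IZR z * s /\ IZR z * s + s < b) \/ (b < IZR z * s /\ IZR z * s + s < a).

Lemma apart_gap (s a b : R) : apart s a b -> s < Rabs (a - b).
Proof. intros [z [[H1 H2]|[H1 H2]]]; unfold Rabs; destruct Rcase_abs; lra. Qed.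

Lemma grid_point_above (s a : R) : 0 < s -> a < IZR (up (a / s)) * s <= a + s.
Proof.
  intro Hs; destruct (archimed (a / s)) as [H1 H2].
  assert (Ha : a / s * s = a) by (field; lra).
  split; nra.
Qed.

Lemma apart_of_far (s a b : R) : 0 < s -> 2 * s < Rabs (a - b) -> apart s a b.
Proof.
  intros Hs Hab; destruct (Rle_or_lt a b) as [Hle|Hlt].
  - rewrite Rabs_left1 in Hab by lra.
    exists (up (a / s)); left; pose proof (grid_point_above s a Hs); lra.
  - rewrite Rabs_right in Hab by lra.
    exists (up (b / s)); right; pose proof (grid_point_above s b Hs); lra.
Qed.

Lemma ex_Z_of_nat (P : Z -> Prop) :
  (exists z, P z) <-> exists n : nat, P (Z.of_nat n) \/ P (- Z.of_nat n)%Z.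
Proof.
  split; [intros [z Pz]|intros [n [Pn|Pn]]; eauto].
  destruct (Z.le_gt_cases 0 z) as [Hz|Hz]; exists (Z.to_nat (Z.abs z)).
  - left; rewrite Z2Nat.id, Z.abs_eq by lia; exact Pz.
  - right; rewrite Z2Nat.id, Z.abs_neq, Z.opp_involutive by lia; exact Pz.
Qed.

Lemma borel_apart {X : Type} (T : Topology X) (s : R) (g1 g2 : X -> R) :
  borel_fun T g1 -> borel_fun T g2 -> borel_set T (fun x => apart s (g1 x) (g2 x)).
Proof.
  intros H1 H2; apply (borel_ext T _ _ (fun x => iff_sym (ex_Z_of_nat _))).
  apply borel_union; intro n.
  apply borel_or; apply borel_or; apply borel_and;
    auto using borel_fun_lt, borel_fun_gt.
Qed.

Lemma convergence_of_borel_selective {X : Type} (T : Topology X) :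
  Ib_selective (borel_set T) ->
  forall (fam : nat * nat -> X -> R) (f : X -> R),
    (forall d, borel_fun T (fam d)) -> Ib_converges fam f ->
    exists A, in_Ib_star A /\ pointwise_converges_on A fam f.
Proof.
  intros Hsel fam f Hfam Hconv.
  set (s := fun k : nat => / INR (S k)).
  assert (Hs : forall k, 0 < s k) by (intro k; apply Rinv_0_lt_compat, lt_0_INR; lia).
  (* [osc k] does not mention [f], so it is Borel even when [f] is not. *)
  set (osc := fun k (d : nat * nat) x =>
    exists i, apart (s k) (fam d x) (fam (fst d, snd d + i)%nat x)).
  assert (Hosc : forall k, exists h, forall x, finite_set (fun d => ~ A_h h d /\ osc k d x)).
  { intro k; apply Hsel.
    - intro d; apply borel_union; intro i; apply borel_apart; apply Hfam.
    - intro x; destruct (Ib_converges_row_tail fam f x (s k / 2) Hconv) as [h0 Hh0];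
        [pose proof (Hs k); lra|].
      exists h0; intros [n m] [i Hi]; unfold A_h; cbn [fst snd] in *.
      apply Nat.nlt_ge; intro Hlt.
      pose proof (apart_gap _ _ _ Hi) as Hgap.
      pose proof (Hh0 n m Hlt) as Ha; pose proof (Hh0 n (m + i)%nat ltac:(lia)) as Hb.
      revert Hgap Ha Hb; unfold Rabs; repeat destruct Rcase_abs; lra. }
  destruct (functional_choice _ Hosc) as [hk Hhk].
  destruct (diagonal_dominating hk) as [h Hh].
  exists (fun d => ~ A_h h d); split; [apply in_Ib_star_not_A_h|].
  intros x eps Heps.
  destruct (archimed_cor1 (eps / 3)) as [[|k] [Hk Hk0]]; [lra|lia|].
  destruct (Ib_converges_row_tail fam f x eps Hconv Heps) as [h0 Hh0].
  destruct (Ib_converges_row_tail fam f x (s k) Hconv (Hs k)) as [h1 Hh1].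
  refine (finite_set_mono _ _ _ (finite_set_or _ _ (Hhk k x)
    (finite_set_rows h0 _ (finite_set_lt k)))).
  intros [n m] [Hnm Hfar]; unfold A_h in Hnm; cbn [fst snd] in *.
  destruct (le_lt_dec k n) as [Hkn|Hkn].
  - left; split; [unfold A_h; cbn [fst snd]; pose proof (Hh k n Hkn); lia|].
    exists (S (h1 n)); apply apart_of_far; [apply Hs|]; cbn [fst snd].
    pose proof (Hh1 n (m + S (h1 n))%nat ltac:(lia)) as Hclose.
    assert (Hsk : 3 * s k < eps) by (unfold s; lra).
    revert Hfar Hclose; unfold Rabs; repeat destruct Rcase_abs; lra.
  - right; split; [exact Hkn|].
    apply Nat.nlt_ge; intro Hlt; specialize (Hh0 n m Hlt); lra.
Qed.

Theorem mainTheorem15 (X : Type) (T : Topology X)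
  (hX : open_countable_union_clopen T) :
  let P1 := bounded_ideal_convergence_property T in
  let P2 := forall fam : nat * nat -> X -> R,
      (forall d, borel_fun T (fam d)) ->
      Ib_converges fam (fun _ => 0) ->
      exists A, in_Ib_star A /\ pointwise_converges_on A fam (fun _ => 0) in
  let P3 := forall (fam : nat * nat -> X -> R) (f : X -> R),
      (forall d, borel_fun T (fam d)) -> borel_fun T f ->
      Ib_converges fam f ->
      exists A, in_Ib_star A /\ pointwise_converges_on A fam f in
  let P4 := forall (fam : nat * nat -> X -> R) (f : X -> R),
      (forall d, borel_fun T (fam d)) ->
      Ib_converges fam f ->
      exists A, in_Ib_star A /\ pointwise_converges_on A fam f in
  (P1 <-> P2) /\ (P1 <-> P3) /\ (P1 <-> P4).
Proof.
  intros P1 P2 P3 P4.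
  assert (H14 : P1 -> P4).
  { intro H1; exact (convergence_of_borel_selective T
      (borel_selective T hX (clopen_selective_of_convergence_property T H1))). }
  assert (H43 : P4 -> P3) by (intros H4 fam f Hfam _; apply H4, Hfam).
  assert (H32 : P3 -> P2) by (intros H3 fam Hfam; apply H3; [exact Hfam|apply borel_fun_const]).
  assert (H21 : P2 -> P1)
    by (intros H2 fam Hfam; apply H2; intro d; apply borel_fun_of_continuous, Hfam).
  tauto.
Qed.
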